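(* For every integer $n\ge 2$, $|PF_{n,n-2}|=n^n-n^{n-2}$.
   Context: For $n\in\mathbb{N}$ let $[n]=\{1,\dots,n\}$ and $PP_n=[n]^n$. For an integer $k\ge 0$, the $k$-Naples parking rule: there are $n$ spots numbered $1,\dots,n$ west to east, initially empty; cars $c_1,\dots,c_n$ arrive in order, car $c_i$ preferring spot $a_i$. If spot $a_i$ is empty, $c_i$ parks there. Otherwise $c_i$ checks spots $a_i-1,\dots,a_i-k$ in this order (skipping those $<1$) and parks in the first empty one; if all are occupied, it drives east and parks in the first empty spot numbered greater than $a_i$, failing to park if none exists. $PF_{n,k}$ is the set of preferences in $PP_n$ for which all cars park. *)

From mathcomp Require Import all_boot.
Set Implicit Arguments. Unset Strict Implicit. Unset Printing Implicit Defensive.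

(* Spots are numbered 1..n; [occ] is the list of occupied spots.
   [find_first P s] returns the first element of [s] satisfying [P]. *)
Definition find_first (P : pred nat) (s : seq nat) : option nat :=
  let i := find P s in if i < size s then Some (nth 0 s i) else None.

(* Spot chosen by a car preferring spot [a] under the k-Naples rule,
   with n spots and occupied spots [occ]; None = fails to park. *)
Definition naples_spot (n k : nat) (occ : seq nat) (a : nat) : option nat :=
  let free := fun s : nat => s \notin occ in
  if free a then Some a
  else match find_first free [seq a - j | j <- iota 1 k & j < a] with
       (* a - j for j = 1..k, skipping those with a - j < 1 *)
       | Some s => Some s
       | None => find_first free (iota a.+1 (n - a))
       end.

Fixpoint naples_run (n k : nat) (occ : seq nat) (prefs : seq nat) : option (seq nat) :=
  match prefs with
  | [::] => Some occ
  | a :: rest =>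
      match naples_spot n k occ a with
      | Some s => naples_run n k (s :: occ) rest
      | None => None
      end
  end.

(* A preference sequence in PP_n = [n]^n, encoded as f : 'I_n -> 'I_n where
   car c_{i+1} prefers spot (f i).+1. *)
Definition prefs_of (n : nat) (f : {ffun 'I_n -> 'I_n}) : seq nat :=
  [seq (f i).+1 | i <- enum 'I_n].

Definition is_naples_pf (n k : nat) (f : {ffun 'I_n -> 'I_n}) : bool :=
  naples_run n k [::] (prefs_of f) != None.

Definition PF (n k : nat) : {set {ffun 'I_n -> 'I_n}} :=
  [set f | is_naples_pf k f].

From mathcomp Require Import all_boot ssralg zmodp zify.
Set Implicit Arguments. Unset Strict Implicit. Unset Printing Implicit Defensive.
Import GRing.Theory.

(* Write n = m + 2 and number spots 0..n-1 (internal spot i is the physical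
   spot i+1).  As long as spot 0 is free, the (n-2)-Naples rule coincides
   with backward circular parking on Z/n: a car preferring a takes the first
   free spot among a, a-1, a-2, ... (mod n).  The search never wraps around
   (spot 0 is free), and it needs more than n-2 backward steps only when all
   spots but 0 are taken.  Once spot 0 is taken every later car parks.
   Hence, if O(f) denotes the n-1 spots filled by the first n-1 cars under
   circular parking, f fails exactly when 0 is not in O(f) and the last car
   prefers spot n-1 (lemma [naples_pf_circular]).

   Circular parking commutes with rotations of Z/n, so the classes
   B c d = {f | c not in O(f) and f(last) = d} all have the same size; since
   O(f) misses exactly one spot they partition PP_n, so each has n^(n-2)
   elements, and the failures form the class B 0 (n-1). *)

Lemma find_first_noneP (P : pred nat) (s : seq nat) :
  reflect (find_first P s = None) (~~ has P s).
Proof. by rewrite /find_first has_find; case: ltnP => _; constructor. Qed.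

Lemma find_first_some (P : pred nat) (s : seq nat) x :
  find_first P s = Some x -> x \in s /\ P x.
Proof.
rewrite /find_first; case: ifP => // lt_find [<-]; split; first exact: mem_nth.
by apply: nth_find; rewrite has_find.
Qed.

Lemma find_firstE (P : pred nat) (s : seq nat) i :
  i < size s -> P (nth 0 s i) -> (forall j, j < i -> ~~ P (nth 0 s j)) ->
  find_first P s = Some (nth 0 s i).
Proof.
move=> lt_i_s Pi before_i; rewrite /find_first.
have -> : find P s = i.
  apply/eqP; rewrite eqn_leq; apply/andP; split.
    by rewrite leqNgt; apply/negP => /(before_find 0); rewrite Pi.
  rewrite leqNgt; apply/negP => lt_find_i.
  by have := before_i _ lt_find_i; rewrite nth_find // has_find (ltn_trans lt_find_i).
by rewrite lt_i_s.
Qed.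

(* The backward offsets actually tried by a car preferring spot b+1. *)
Lemma filter_iota_lt (k b : nat) :
  [seq j <- iota 1 k | j < b.+1] = iota 1 (minn k b).
Proof.
case: (leqP k b) => [le_k_b | lt_b_k].
  rewrite -[RHS]filter_predT; apply: eq_in_filter => j.
  by rewrite mem_iota /= => j_range; lia.
have -> : k = b + (k - b) by lia.
rewrite iotaD filter_cat.
have -> : [seq j <- iota 1 b | j < b.+1] = iota 1 b.
  rewrite -[RHS]filter_predT; apply: eq_in_filter => j.
  by rewrite mem_iota /= => j_range; lia.
have -> : [seq j <- iota (1 + b) (k - b) | j < b.+1] = [::].
  rewrite -(filter_pred0 (iota (1 + b) (k - b))); apply: eq_in_filter => j.
  by rewrite mem_iota /= => j_range; lia.
by rewrite cats0; congr iota; lia.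
Qed.

Lemma card_sum_mem (I : finType) (A : {pred I}) : #|A| = \sum_(i : I) (i \in A).
Proof. by rewrite -sum1_card big_mkcond; apply: eq_bigr => i _; case: (i \in A). Qed.

Section SpotOneTaken.
(* For k >= n - 2, once physical spot 1 is occupied no car can fail while a
   spot is free: the spots 2..a-1 lie within k backward steps of a, and the
   spots above a are searched forward. *)
Variables n k : nat.
Hypothesis n_le_k2 : n <= k.+2.

Lemma naples_spot_spot1_taken (occ : seq nat) a :
  (forall x, x \in occ -> 0 < x <= n) -> 1 \in occ -> size occ < n -> 0 < a <= n ->
  uniq occ ->
  exists2 s, naples_spot n k occ a = Some s & (s \notin occ) && (0 < s <= n).
Proof.
move=> occ_range occ1 size_occ a_range uniq_occ; rewrite /naples_spot.
case a_occ: (a \in occ) => /=; last by exists a; rewrite ?a_occ.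
case back: (find_first _ _) => [s|].
  have [s_back s_free] := find_first_some back; exists s => //.
  by move: s_back => /mapP [j]; rewrite mem_filter mem_iota s_free => /andP [? ?] ->; lia.
case fwd: (find_first _ _) => [s|].
  have [s_fwd s_free] := find_first_some fwd; exists s => //.
  by move: s_fwd; rewrite mem_iota s_free; lia.
exfalso; move/find_first_noneP/hasPn: back => no_back.
move/find_first_noneP/hasPn: fwd => no_fwd.
have full : {subset iota 1 n <= occ}.
  move=> x; rewrite mem_iota => x_range.
  case: (ltngtP x a) => [lt_x_a|lt_a_x|->] //.
  - case: (eqVneq x 1) => [->//|x_neq1].
    apply/negbNE/no_back/mapP; exists (a - x); last by lia.
    by rewrite mem_filter mem_iota; lia.
  - by apply/negbNE/no_fwd; rewrite mem_iota; lia.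
have := uniq_leq_size (iota_uniq 1 n) full; rewrite size_iota.
by rewrite leqNgt size_occ.
Qed.

Lemma naples_run_spot1_taken (occ prefs : seq nat) :
  uniq occ -> (forall x, x \in occ -> 0 < x <= n) -> 1 \in occ ->
  (forall x, x \in prefs -> 0 < x <= n) -> size occ + size prefs <= n ->
  naples_run n k occ prefs <> None.
Proof.
elim: prefs occ => [|a prefs IH] occ uniq_occ occ_range occ1 prefs_range //= size_le.
have size_occ : size occ < n by lia.
have [s -> /andP [s_free s_range]] := naples_spot_spot1_taken occ_range occ1
  size_occ (prefs_range a (mem_head _ _)) uniq_occ.
apply: IH => /=.
- by rewrite s_free uniq_occ.
- by move=> x; rewrite inE => /orP [/eqP->|/occ_range].
- by rewrite inE occ1 orbT.
- by move=> x x_prefs; apply: prefs_range; rewrite inE x_prefs orbT.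
- by move: size_le => /=; lia.
Qed.

End SpotOneTaken.

Section CircularParking.
Variable m : nat.
Local Notation n := m.+2.
Local Notation T := 'I_n.

Definition back_cands (a : T) : seq T := [seq (a - j%:R)%R | j <- iota 0 n].

(* The spot taken by a car preferring a when [occ] is occupied: the first free
   backward candidate (or a itself if none is free). *)
Definition circ_spot (occ : seq T) (a : T) : T :=
  nth a (back_cands a) (find (fun x => x \notin occ) (back_cands a)).

Fixpoint circ_run (occ prefs : seq T) : seq T :=
  if prefs is a :: rest then circ_run (circ_spot occ a :: occ) rest else occ.

Lemma val_sub_nat (a : T) j : j <= a -> val (a - j%:R)%R = a - j.
Proof.
move=> le_j_a; have -> : (a - j%:R = (a - j)%:R :> T)%R.
  by apply/eqP; rewrite subr_eq -natrD subnK // natr_Zp.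
rewrite Zp_nat /= modn_small //; have := ltn_ord a; lia.
Qed.

Lemma nth_back_cands (a x0 : T) j : j < n -> nth x0 (back_cands a) j = (a - j%:R)%R.
Proof. by move=> lt_j_n; rewrite (nth_map 0) ?size_iota // nth_iota. Qed.

Lemma mem_back_cands (a x : T) : x \in back_cands a.
Proof.
apply/mapP; exists (val (a - x)%R); first by rewrite mem_iota add0n ltn_ord.
by rewrite natr_Zp subKr.
Qed.

Lemma circ_spot_free (occ : seq T) (a : T) :
  size occ < n -> circ_spot occ a \notin occ.
Proof.
move=> size_occ; apply: (@nth_find _ a (fun x => x \notin occ)); apply/hasP.
have [x x_free] : exists x : T, x \notin occ.
  apply/existsP; rewrite -negb_forall; apply/negP => /forallP all_occ.
  have := uniq_leq_size (enum_uniq T) (fun x _ => all_occ x).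
  by rewrite size_enum_ord leqNgt size_occ.
by exists x => //; apply: mem_back_cands.
Qed.

Lemma size_circ_run (occ prefs : seq T) :
  size (circ_run occ prefs) = size occ + size prefs.
Proof. by elim: prefs occ => [|a prefs IH] occ /=; rewrite ?addn0 // IH /= addnS. Qed.

Lemma uniq_circ_run (occ prefs : seq T) :
  uniq occ -> size occ + size prefs <= n -> uniq (circ_run occ prefs).
Proof.
elim: prefs occ => [|a prefs IH] occ //= uniq_occ; rewrite addnS => size_le.
by apply: IH; rewrite /= ?uniq_occ ?andbT ?circ_spot_free //; lia.
Qed.

Lemma circ_run_sub (occ prefs : seq T) : {subset occ <= circ_run occ prefs}.
Proof.
by elim: prefs occ => [|a prefs IH] occ //= x x_occ; apply: IH; rewrite inE x_occ orbT.
Qed.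

Lemma mem_rot (c x : T) (s : seq T) :
  (x \in [seq (y + c)%R | y <- s]) = ((x - c)%R \in s).
Proof.
apply/mapP/idP => [[y y_s ->]|x_s]; first by rewrite addrK.
by exists (x - c)%R => //; rewrite subrK.
Qed.

Lemma circ_spot_rot (occ : seq T) (a c : T) :
  circ_spot [seq (y + c)%R | y <- occ] (a + c)%R = (circ_spot occ a + c)%R.
Proof.
have cands_rot : back_cands (a + c)%R = [seq (y + c)%R | y <- back_cands a].
  by rewrite -map_comp; apply: eq_map => j /=; rewrite addrAC.
rewrite /circ_spot cands_rot find_map.
rewrite (@eq_find _ _ (fun x => x \notin occ)); last by move=> y /=; rewrite mem_rot addrK.
case: (ltnP (find (fun x => x \notin occ) (back_cands a)) (size (back_cands a))).
  by move=> lt_find; rewrite (nth_map a).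
by move=> le_size; rewrite (nth_default _ le_size) nth_default // size_map.
Qed.

Lemma circ_run_rot (occ prefs : seq T) (c : T) :
  circ_run [seq (y + c)%R | y <- occ] [seq (y + c)%R | y <- prefs]
  = [seq (y + c)%R | y <- circ_run occ prefs].
Proof. by elim: prefs occ => [|a prefs IH] occ //=; rewrite circ_spot_rot -IH. Qed.

Lemma circ_spot_no_wrap (occ : seq T) (a : T) : (0%R : T) \notin occ ->
  [/\ nat_of_ord (circ_spot occ a) <= a, circ_spot occ a \notin occ &
      forall t : T, nat_of_ord (circ_spot occ a) < t <= a -> t \in occ].
Proof.
move=> free0; set P := (fun x : T => x \notin occ).
have le_find_a : find P (back_cands a) <= a.
  rewrite leqNgt; apply/negP => /(before_find a).
  by rewrite nth_back_cands // natr_Zp subrr /P free0.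
have lt_find_n : find P (back_cands a) < n by have := ltn_ord a; lia.
have spotE : nat_of_ord (circ_spot occ a) = a - find P (back_cands a).
  by rewrite /circ_spot nth_back_cands // val_sub_nat.
have spot_free : circ_spot occ a \notin occ.
  by apply: (@nth_find _ a P); apply/hasP; exists 0%R => //; apply: mem_back_cands.
split => //; first by rewrite spotE leq_subr.
move=> t /andP [lt_spot_t le_t_a].
have lt_at : a - t < find P (back_cands a) by rewrite spotE in lt_spot_t; lia.
have := before_find a lt_at; rewrite nth_back_cands; last by have := ltn_ord a; lia.
have -> : (a - (a - t)%:R)%R = t.
  by apply: val_inj; rewrite val_sub_nat ?leq_subr // subKn.
by rewrite /P => /negbFE.
Qed.

(* If moreover at most n-2 spots are taken, the car walks back at most n-2
   steps: otherwise all of 1..n-1 would be taken. *)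
Lemma circ_spot_near (occ : seq T) (a : T) :
  (0%R : T) \notin occ -> size occ <= m -> a - circ_spot occ a <= m.
Proof.
move=> free0 size_occ; have [_ _ taken] := circ_spot_no_wrap a free0.
rewrite leqNgt; apply/negP => far.
have all_but0 : predC1 (0%R : T) \subset occ.
  apply/subsetP => t; rewrite inE => t_neq0; apply: taken.
  have t_pos : 0 < nat_of_ord t by rewrite lt0n; apply: contra t_neq0 => /eqP t0; apply/eqP/val_inj.
  by have := ltn_ord t; have := ltn_ord a; lia.
have := leq_trans (subset_leq_card all_but0) (card_size occ).
by rewrite cardC1 card_ord /= leqNgt ltnS size_occ.
Qed.

End CircularParking.

Section NaplesAsCircular.
Variable m : nat.
Local Notation n := m.+2.
Local Notation T := 'I_n.

Definition spot_of (x : T) : nat := x.+1.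

Lemma spot_of_inj : injective spot_of.
Proof. by move=> x y [] /val_inj. Qed.

Lemma mem_spot_of (occ : seq T) (x : T) : ((x : nat).+1 \in map spot_of occ) = (x \in occ).
Proof. exact: (mem_map spot_of_inj). Qed.

Lemma naples_spot_circ (occ : seq T) (a : T) :
  (0%R : T) \notin occ -> size occ <= m ->
  naples_spot n m (map spot_of occ) a.+1 = Some (circ_spot occ a).+1.
Proof.
move=> free0 size_occ; have near := circ_spot_near a free0 size_occ.
have [le_s_a s_free taken] := circ_spot_no_wrap a free0.
set s := circ_spot occ a in near le_s_a s_free taken *.
rewrite /naples_spot mem_spot_of.
case a_occ: (a \in occ) => /=.
  have lt_s_a : (s : nat) < a.
    rewrite ltn_neqAle le_s_a andbT; apply: contraNneq s_free => /val_inj ->.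
    by rewrite a_occ.
  rewrite filter_iota_lt; set L := [seq a.+1 - j | j <- iota 1 (minn m a)].
  have size_L : size L = minn m a by rewrite size_map size_iota.
  have nth_L j : j < size L -> nth 0 L j = a - j.
    by rewrite size_L => lt_j; rewrite (nth_map 0) ?size_iota // nth_iota //; lia.
  (* spot s+1 is reached after a - s backward steps, i.e. at index a - s - 1 *)
  have lt_idx : a - s - 1 < size L by rewrite size_L; lia.
  have nth_idx : nth 0 L (a - s - 1) = (s : nat).+1 by rewrite nth_L //; lia.
  rewrite (find_firstE lt_idx) ?nth_idx ?mem_spot_of // => j lt_j.
  rewrite nth_L ?size_L; last by lia.
  have lt_ajn : a - j - 1 < n by have := ltn_ord a; lia.
  rewrite (_ : a - j = (Ordinal lt_ajn : nat).+1); last by rewrite /=; lia.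
  by rewrite mem_spot_of negbK; apply: taken; rewrite /=; lia.
congr (Some _.+1); apply/eqP; rewrite eqn_leq le_s_a andbT leqNgt.
by apply/negP => lt_s_a; move: a_occ; rewrite taken // lt_s_a leqnn.
Qed.

(* When all spots but 0 are taken, the last car fails exactly when it prefers
   spot n-1: from there spot 0 is n-1 > n-2 backward steps away. *)
Lemma naples_spot_last (occ : seq T) (l : T) :
  uniq occ -> (0%R : T) \notin occ -> size occ = m.+1 ->
  (naples_spot n m (map spot_of occ) l.+1 == None) = (l == ord_max).
Proof.
move=> uniq_occ free0 size_occ.
have occE (x : T) : (x \in occ) = (x != 0%R).
  have sub : occ \subset predC1 (0%R : T).
    by apply/subsetP => y y_occ; rewrite inE; apply: contraNneq free0 => <-.
  have card_eq : #|occ| = #|predC1 (0%R : T)|.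
    by rewrite cardC1 card_ord (card_uniqP uniq_occ) size_occ.
  by rewrite (subset_cardP card_eq sub) inE.
have physE v : (v \in map spot_of occ) = (1 < v <= n).
  apply/mapP/idP => [[x x_occ ->]|v_range].
    rewrite occE in x_occ; rewrite /spot_of ltnS ltn_ord andbT lt0n.
    by apply: contra x_occ => /eqP x0; apply/eqP/val_inj.
  have lt_v1_n : v.-1 < n by lia.
  exists (Ordinal lt_v1_n); last by rewrite /spot_of /=; lia.
  by rewrite occE; apply/eqP => /(congr1 val) /=; lia.
rewrite /naples_spot physE.
have [l0 | l_pos] := posnP l.
  by rewrite l0 -val_eqE /= l0.
rewrite ltnS l_pos ltn_ord /=.
case: (eqVneq l ord_max) => [-> /= | l_neq_max].
  rewrite (_ : find_first _ _ = None); last first.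
    apply/find_first_noneP/hasPn => x /mapP [j]; rewrite mem_filter mem_iota.
    by move=> /andP [_ j_range] ->; rewrite negbK physE; lia.
  by rewrite subnn.
have le_l_m : (l : nat) <= m.
  have : (l : nat) != m.+1 by apply: contraNneq l_neq_max => l_max; rewrite -val_eqE /= l_max.
  by have := ltn_ord l; lia.
have /negP back_some : find_first (fun s => s \notin map spot_of occ)
    [seq l.+1 - j | j <- iota 1 m & j < l.+1] != None.
  apply/negP => /eqP/find_first_noneP/negP; apply; apply/hasP; exists 1; last by rewrite physE.
  by apply/mapP; exists (l : nat); rewrite ?mem_filter ?mem_iota ?ltnSn /=; lia.
by case: find_first back_some.
Qed.

Lemma naples_run_circ (occ prefs : seq T) (l : T) :
  uniq occ -> (0%R : T) \notin occ -> size occ + size prefs = m.+1 ->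
  (naples_run n m (map spot_of occ) (map spot_of (prefs ++ [:: l])) != None)
  = ((0%R : T) \in circ_run occ prefs) || (l != ord_max).
Proof.
elim: prefs occ => [|a prefs IH] occ uniq_occ free0 /=; rewrite ?addn0 => size_occ.
  rewrite (negbTE free0) /= -(naples_spot_last l uniq_occ free0 size_occ).
  by case: naples_spot.
have size_occ_m : size occ <= m by lia.
rewrite (naples_spot_circ a free0 size_occ_m) /=.
have s_free : circ_spot occ a \notin occ by apply: circ_spot_free; lia.
case: (eqVneq (circ_spot occ a) 0%R) => [s0 | s_neq0].
  have -> : (0%R : T) \in circ_run (circ_spot occ a :: occ) prefs.
    by apply: circ_run_sub; rewrite s0 mem_head.
  apply/eqP; apply: naples_run_spot1_taken.
  - done.
  - by rewrite /= mem_spot_of s_free (map_inj_uniq spot_of_inj).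
  - by move=> x; rewrite inE => /orP [/eqP ->|/mapP [y _ ->]]; rewrite /spot_of ltn_ord.
  - by rewrite s0 mem_head.
  - by move=> x /mapP [y _ ->]; rewrite /spot_of ltn_ord.
  - by rewrite /= !size_map size_cat /=; lia.
apply: (IH (circ_spot occ a :: occ)) => /=.
- by rewrite s_free uniq_occ.
- by rewrite inE negb_or eq_sym s_neq0 free0.
- by lia.
Qed.

(* The preferences of the first n-1 cars, and the spots they fill under
   circular parking (the set O(f)). *)
Definition head_prefs (f : {ffun T -> T}) : seq T :=
  [seq f (widen_ord (leqnSn _) i) | i <- enum 'I_(m.+1)].

Definition head_occ (f : {ffun T -> T}) : seq T := circ_run [::] (head_prefs f).

Lemma size_head_prefs (f : {ffun T -> T}) : size (head_prefs f) = m.+1.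
Proof. by rewrite size_map size_enum_ord. Qed.

Lemma uniq_head_occ (f : {ffun T -> T}) : uniq (head_occ f).
Proof. by apply: uniq_circ_run; rewrite ?size_head_prefs. Qed.

Lemma size_head_occ (f : {ffun T -> T}) : size (head_occ f) = m.+1.
Proof. by rewrite size_circ_run size_head_prefs. Qed.

Lemma naples_pf_circular (f : {ffun T -> T}) :
  is_naples_pf m f = ((0%R : T) \in head_occ f) || (f ord_max != ord_max).
Proof.
rewrite /is_naples_pf.
have -> : prefs_of f = map spot_of (head_prefs f ++ [:: f ord_max]).
  by rewrite /prefs_of /head_prefs enum_ordSr cats1 !map_rcons -!map_comp.
by rewrite -(naples_run_circ (occ := [::])) // size_head_prefs.
Qed.

End NaplesAsCircular.

Section RotationCount.
Variable m : nat.
Local Notation n := m.+2.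
Local Notation T := 'I_n.

Definition rotate (c d : T) (f : {ffun T -> T}) : {ffun T -> T} :=
  [ffun i => if i == ord_max then (f i + d)%R else (f i + c)%R].

Lemma rotateK (c d : T) : cancel (rotate c d) (rotate (- c)%R (- d)%R).
Proof. by move=> f; apply/ffunP => i; rewrite !ffunE; case: (i == ord_max); rewrite addrK. Qed.

Lemma head_occ_rotate (c d x : T) (f : {ffun T -> T}) :
  (x \in head_occ (rotate c d f)) = ((x - c)%R \in head_occ f).
Proof.
rewrite /head_occ.
have -> : head_prefs (rotate c d f) = [seq (y + c)%R | y <- head_prefs f].
  rewrite /head_prefs -[in RHS]map_comp; apply: eq_map => i /=; rewrite ffunE.
  by rewrite -val_eqE /= ltn_eqF.
by rewrite -[[::]]/(map (fun y => (y + c)%R) [::]) circ_run_rot mem_rot.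
Qed.

Definition gap_class (c d : T) : {set {ffun T -> T}} :=
  [set f | (c \notin head_occ f) && (f ord_max == d)].

(* By rotation, all classes have the same size. *)
Lemma card_gap_class (c d : T) : #|gap_class c d| = #|gap_class 0%R 0%R|.
Proof.
rewrite -[RHS](card_preimset _ (can_inj (rotateK (- c)%R (- d)%R))).
apply: eq_card => f; rewrite !inE head_occ_rotate ffunE eqxx sub0r opprK.
by rewrite subr_eq0.
Qed.

Lemma card_gaps (f : {ffun T -> T}) : #|[predC head_occ f]| = 1.
Proof.
apply/eqP; rewrite -(eqn_add2l #|head_occ f|) cardC card_ord.
by rewrite (card_uniqP (uniq_head_occ f)) size_head_occ addn1.
Qed.

Lemma gap_class_partition (f : {ffun T -> T}) :
  \sum_(c : T) \sum_(d : T) (f \in gap_class c d) = 1.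
Proof.
have one_d (c : T) : \sum_(d : T) (f \in gap_class c d) = (c \notin head_occ f).
  rewrite (bigD1 (f ord_max)) //= inE eqxx andbT big1 ?addn0 // => d d_neq.
  by rewrite inE eq_sym (negbTE d_neq) andbF.
by rewrite (eq_bigr _ (fun c _ => one_d c)) -(card_gaps f) card_sum_mem.
Qed.

(* The n^2 classes have equal sizes and together contain all n^n functions. *)
Lemma card_gap_class0 : #|gap_class 0%R 0%R| = n ^ m.
Proof.
have total : \sum_(c : T) \sum_(d : T) #|gap_class c d| = n ^ n.
  transitivity (\sum_(f : {ffun T -> T}) \sum_(c : T) \sum_(d : T) (f \in gap_class c d)).
    rewrite [RHS]exchange_big; apply: eq_bigr => c _; rewrite [RHS]exchange_big.
    by apply: eq_bigr => d _; rewrite card_sum_mem.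
  by rewrite (eq_bigr _ (fun f _ => gap_class_partition f)) sum1_card card_ffun !card_ord.
move: total; under eq_bigr do under eq_bigr do rewrite card_gap_class.
rewrite !big_const_ord !iter_addn_0 !expnSr => /eqP.
by rewrite !eqn_pmul2r // => /eqP.
Qed.

End RotationCount.

Theorem corollary2p4 (n : nat) : 2 <= n -> #|PF n (n - 2)| = n ^ n - n ^ (n - 2).
Proof.
case: n => [|[|m]] // _; rewrite !subSS subn0.
have -> : PF m.+2 m = ~: gap_class 0%R ord_max.
  by apply/setP => f; rewrite !inE naples_pf_circular negb_and negbK.
have := cardsC (gap_class 0%R (ord_max : 'I_m.+2)).
by rewrite card_gap_class card_gap_class0 card_ffun !card_ord => <-; rewrite addKn.
Qed.
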